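(* Consider the deterministic multiclass single-server system MCSS(RO) described in the context, with all $\lambda_j>0$, $\rho<1$, and constants $\Gamma_{a,j},\Gamma_{s,j}\ge0$ such that for all $k\ge1$ and $j=1,\dots,J$, $$\Big|\sum_{i=1}^k U^j_i-\lambda_j^{-1}k\Big|\le\Gamma_{a,j}\phi(k),\qquad \Big|\sum_{i=1}^k V^j_i-\mu_j^{-1}k\Big|\le\Gamma_{s,j}\phi(k).$$ Let $\Gamma=\max_j(\Gamma_{a,j},\Gamma_{s,j})$ and assume $\min_j\lambda_j\Gamma\ge e^{2e}$. Let $B$ be the duration of the busy period initiated at time $0$. Then $$B\le \frac{5(4J+3)^2\bar\lambda_{\max}^3\Gamma^4}{(1-\rho)^2}\ln\ln\frac{2(4J+3)\bar\lambda_{\max}^2\Gamma^2}{1-\rho},$$ and $$\sup_{0\le t\le B}W(t)\le \frac{2(4J+3)^2\bar\lambda_{\max}^3\Gamma^4}{1-\rho}\ln\ln\frac{(4J+3)\bar\lambda_{\max}^2\Gamma^2}{1-\rho}+\Gamma+3\bar\lambda_{\max}^2\Gamma^3.$$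
   Context: $\phi(x)=\sqrt{x\ln\ln x}$ for $x\ge e^e$ and $\phi(x)=1$ otherwise. MCSS(RO): one server, $J$ job classes with infinite buffers $B_1,\dots,B_J$; at time $0$ there is exactly one job in every buffer. For class $j$, deterministic nonnegative sequences $(U^j_k)_{k\ge1}$ (the $k$-th external arrival to class $j$ occurs at time $\sum_{i\le k}U^j_i$) and $(V^j_k)_{k\ge1}$ (service requirement of the $k$-th job of class $j$). $A_j(t)=\max\{k\ge0:\sum_{i=1}^kU^j_i\le t\}$, $A(t)=(A_j(t))_j$. Routing matrix $P\in\{0,1\}^{J\times J}$ with row sums in $\{0,1\}$ and $P^N=0$ for some $N$: after service in class $i$ a job moves to class $j$ if $P_{ij}=1$, otherwise leaves. The scheduling policy is an arbitrary work-conserving policy (FIFO within a class). $\lambda=(\lambda_j)$, $\bar\lambda=(I-P^T)^{-1}\lambda$, $\bar\lambda_{\max}=\max_j\bar\lambda_j$, $\bar A(t)=(I-P^T)^{-1}A(t)$, $m_j=\mu_j^{-1}$, $\rho=\sum_j\bar\lambda_j/\mu_j$. $W(t)$ is the workload at time $t$ (time needed to clear all work present, without further external arrivals); during the busy period starting at $0$ the paper uses the identity $W(t)=\sum_{j=1}^J\sum_{i=1}^{\bar A_j(t)}V^j_i-t$, and $B$ is the end of this busy period. *)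

From Stdlib Require Import Reals Lra Lia.
Open Scope R_scope.

Fixpoint rsum (n : nat) (f : nat -> R) : R :=
  match n with O => 0 | S m => rsum m f + f m end.
Fixpoint nsum (n : nat) (f : nat -> nat) : nat :=
  match n with O => 0%nat | S m => (nsum m f + f m)%nat end.
(* max_{j<n} f j, for nonnegative families (0 for n = 0) *)
Fixpoint rmaxn (n : nat) (f : nat -> R) : R :=
  match n with O => 0 | S m => Rmax (rmaxn m f) (f m) end.

Definition phi (x : R) : R :=
  if Rle_dec (exp (exp 1)) x then sqrt (x * ln (ln x)) else 1.

(* J x J nat matrices, indices 0..J-1 *)
Definition nmatmul (J : nat) (A B : nat -> nat -> nat) (i k : nat) : nat :=
  nsum J (fun j => (A i j * B j k)%nat).
Fixpoint nmatpow (J : nat) (P : nat -> nat -> nat) (n : nat) : nat -> nat -> nat :=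
  match n with
  | O => fun i j => if Nat.eqb i j then 1%nat else 0%nat
  | S m => nmatmul J (nmatpow J P m) P
  end.
Definition mtrans (P : nat -> nat -> nat) : nat -> nat -> nat := fun i j => P j i.

(* (I - P^T)^{-1} = sum_{n<N} (P^T)^n, valid whenever P^N = 0 *)
Definition invIPT (J N : nat) (P : nat -> nat -> nat) (i j : nat) : nat :=
  nsum N (fun n => nmatpow J (mtrans P) n i j).

Definition Abar (J N : nat) (P : nat -> nat -> nat) (A : nat -> R -> nat)
  (j : nat) (t : R) : nat :=
  nsum J (fun i => (invIPT J N P j i * A i t)%nat).

Definition lambar (J N : nat) (P : nat -> nat -> nat) (lam : nat -> R) (j : nat) : R :=
  rsum J (fun i => INR (invIPT J N P j i) * lam i).

Definition rho (J N : nat) (P : nat -> nat -> nat) (lam mu : nat -> R) : R :=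
  rsum J (fun j => lambar J N P lam j / mu j).

(* partial U k = sum_{i=1}^k U_i  (sequences indexed from 1; index 0 unused) *)
Definition partial (U : nat -> R) (k : nat) : R := rsum k (fun i => U (S i)).

Definition IsArrivalCount (J : nat) (U : nat -> nat -> R) (A : nat -> R -> nat) : Prop :=
  forall j t, (j < J)%nat -> 0 <= t ->
    partial (U j) (A j t) <= t /\
    (forall k, partial (U j) k <= t -> (k <= A j t)%nat).

(* W(t) = sum_j sum_{i=1}^{Abar_j(t)} V^j_i - t (identity used during the busy period) *)
Definition workload (J N : nat) (P : nat -> nat -> nat) (A : nat -> R -> nat)
  (V : nat -> nat -> R) (t : R) : R :=
  rsum J (fun j => partial (V j) (Abar J N P A j t)) - t.

Definition IsBusyEnd (W : R -> R) (B : R) : Prop :=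
  0 <= B /\ (forall t, 0 <= t < B -> 0 < W t) /\ W B <= 0.

From Stdlib Require Import Reals Lra Lia Psatz.
From Coquelicot Require Import Rcomplements.
Open Scope R_scope.

(* Both bounds follow from a drift inequality [W t <= - (1 - rho) t / 2 + C] on an interval
   [[0, T]] with [W T <= 0]: the busy period ends before [T], and until then [W <= C].
   The arrival counts satisfy [A_j(t) <= lam_j (t + Gamma phi (A_j(t)))].  Bounding [phi] crudely
   by a linear function first gives [A_j(t) <= lam_j D(t)] with [D] affine in [t], so on [[0, T]]
   all counts [A_j], [Abar_j] stay below [M = lambar_max D(T)].  There AM-GM gives
   [phi y <= 1 + d y + ln (ln M) / (4 d)], and [d = (1 - rho) / (4 K lambar_max Gamma)] makes the
   [phi]-terms of the workload cost at most half the drift [(1 - rho) t]. *)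

Lemma rsum_ext n f g : (forall i, (i < n)%nat -> f i = g i) -> rsum n f = rsum n g.
Proof.
  induction n as [|n IH]; intros H; simpl; [reflexivity|].
  rewrite IH by (intros; apply H; lia). rewrite H by lia. reflexivity.
Qed.

Lemma rsum_le n f g : (forall i, (i < n)%nat -> f i <= g i) -> rsum n f <= rsum n g.
Proof.
  induction n as [|n IH]; intros H; simpl; [lra|].
  apply Rplus_le_compat; [apply IH; intros; apply H|apply H]; lia.
Qed.

Lemma rsum_scal n c f : rsum n (fun i => c * f i) = c * rsum n f.
Proof. induction n as [|n IH]; simpl; [ring|]. rewrite IH. ring. Qed.

Lemma rsum_plus n f g : rsum n (fun i => f i + g i) = rsum n f + rsum n g.
Proof. induction n as [|n IH]; simpl; [ring|]. rewrite IH. ring. Qed.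

Lemma rsum_const n c : rsum n (fun _ => c) = INR n * c.
Proof. induction n as [|n IH]; cbn [rsum]; [simpl; ring|]. rewrite IH, S_INR. ring. Qed.

Lemma rsum_nonneg n f : (forall i, (i < n)%nat -> 0 <= f i) -> 0 <= rsum n f.
Proof.
  intros H. replace 0 with (rsum n (fun _ => 0)) by (rewrite rsum_const; ring).
  apply rsum_le, H.
Qed.

Lemma rsum_ge_term n f k :
  (forall i, (i < n)%nat -> 0 <= f i) -> (k < n)%nat -> f k <= rsum n f.
Proof.
  induction n as [|n IH]; intros H Hk; simpl; [lia|].
  destruct (Nat.eq_dec k n) as [->|Hne].
  - pose proof (rsum_nonneg n f (fun i Hi => H i ltac:(lia))). lra.
  - pose proof (IH (fun i Hi => H i ltac:(lia)) ltac:(lia)). pose proof (H n ltac:(lia)). lra.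
Qed.

Lemma INR_nsum n f : INR (nsum n f) = rsum n (fun i => INR (f i)).
Proof. induction n as [|n IH]; simpl; [reflexivity|]. rewrite plus_INR, IH. reflexivity. Qed.

Lemma nsum_ext n f g : (forall i, (i < n)%nat -> f i = g i) -> nsum n f = nsum n g.
Proof.
  induction n as [|n IH]; intros H; simpl; [reflexivity|].
  rewrite IH by (intros; apply H; lia). rewrite H by lia. reflexivity.
Qed.

Lemma nsum_ge_term n f k : (k < n)%nat -> (f k <= nsum n f)%nat.
Proof.
  induction n as [|n IH]; intros Hk; simpl; [lia|].
  destruct (Nat.eq_dec k n) as [->|Hne]; [lia|]. specialize (IH ltac:(lia)). lia.
Qed.

Lemma rmaxn_ge n f k : (k < n)%nat -> f k <= rmaxn n f.
Proof.
  induction n as [|n IH]; intros Hk; simpl; [lia|].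
  destruct (Nat.eq_dec k n) as [->|Hne]; [apply Rmax_r|].
  eapply Rle_trans; [apply IH; lia|apply Rmax_l].
Qed.

Lemma exp_le_compat a b : a <= b -> exp a <= exp b.
Proof. intros [H|H]; [left; apply exp_increasing, H|rewrite H; lra]. Qed.

Lemma ln_le_sub1 y : 0 < y -> ln y <= y - 1.
Proof. intros Hy. pose proof (exp_ineq1_le (ln y)) as H. rewrite exp_ln in H by exact Hy. lra. Qed.

Lemma exp1_ge2 : 2 <= exp 1.
Proof. pose proof (exp_ineq1_le 1). lra. Qed.

Lemma lnln_le a b : 1 < a -> a <= b -> ln (ln a) <= ln (ln b).
Proof.
  intros Ha Hab. apply ln_le; [|apply ln_le; lra].
  rewrite <- ln_1. apply ln_increasing; lra.
Qed.

Lemma lnln_ge1 z : exp (exp 1) <= z -> 1 <= ln (ln z).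
Proof.
  intros Hz. pose proof (exp_ineq1_le (exp 1)). pose proof exp1_ge2.
  rewrite <- (ln_exp 1) at 1. rewrite <- (ln_exp (exp 1)) at 1.
  apply lnln_le; lra.
Qed.

Lemma lnln_le_pow4 Y M : exp 4 <= Y -> 1 < M <= Y ^ 4 -> ln (ln M) <= 2 * ln (ln Y).
Proof.
  intros HY [HM1 HM].
  assert (HlnY : 4 <= ln Y) by (rewrite <- (ln_exp 4); apply ln_le; [apply exp_pos|exact HY]).
  apply Rle_trans with (ln (ln (Y ^ 4))); [apply lnln_le; lra|].
  rewrite ln_pow by (pose proof (exp_pos 4); lra).
  rewrite ln_mult by (simpl; lra).
  assert (ln (INR 4) <= ln (ln Y)) by (apply ln_le; simpl; lra).
  lra.
Qed.

Lemma sqrt_mul_le a b d : 0 <= a -> 0 <= b -> 0 < d -> sqrt (a * b) <= d * a + b / (4 * d).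
Proof.
  intros Ha Hb Hd.
  assert (Hb4 : 0 <= b / (4 * d)) by (apply Rle_mult_inv_pos; lra).
  rewrite <- (sqrt_square (d * a + b / (4 * d))) by nra.
  apply sqrt_le_1_alt.
  replace ((d * a + b / (4 * d)) * (d * a + b / (4 * d)))
    with (a * b + (d * a - b / (4 * d)) ^ 2) by (field; lra).
  pose proof (pow2_ge_0 (d * a - b / (4 * d))). lra.
Qed.

Lemma phi_nonneg y : 0 <= phi y.
Proof. unfold phi. destruct Rle_dec; [apply sqrt_pos|lra]. Qed.

Lemma phi_le y u d : 0 <= y -> 0 <= u -> 0 < d ->
  (exp (exp 1) <= y -> ln (ln y) <= u) -> phi y <= 1 + d * y + u / (4 * d).
Proof.
  intros Hy Hu Hd Hlnln.
  assert (0 <= u / (4 * d)) by (apply Rle_mult_inv_pos; lra).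
  unfold phi. destruct Rle_dec as [Hee|_]; [|nra].
  pose proof (lnln_ge1 y Hee).
  apply Rle_trans with (sqrt (y * u)).
  - apply sqrt_le_1_alt, Rmult_le_compat_l; auto.
  - pose proof (sqrt_mul_le y u d Hy Hu Hd). lra.
Qed.

Lemma phi_le_linear x y : 1 <= x -> 0 <= y -> phi y <= 1 + y / (2 * x) + 2 * x * ln (2 * x).
Proof.
  intros Hx Hy.
  assert (Hl : 0 <= ln (2 * x)) by (rewrite <- ln_1; apply ln_le; lra).
  replace (1 + y / (2 * x) + 2 * x * ln (2 * x))
    with (1 + / (4 * x) * y + (y / (4 * x ^ 2) + 2 * ln (2 * x)) / (4 * / (4 * x)))
    by (field; lra).
  (* [phi_le] with [d = 1 / (4 x)], using [ln (ln y) <= ln y <= y / (4 x^2) + 2 ln (2 x)] *)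
  apply phi_le; [exact Hy| |apply Rinv_0_lt_compat; lra|].
  { assert (0 <= y / (4 * x ^ 2)) by (apply Rle_mult_inv_pos; nra). lra. }
  intros Hee. pose proof exp1_ge2. pose proof (exp_ineq1_le (exp 1)).
  assert (Hly : 1 < ln y) by (rewrite <- (ln_exp 1); apply ln_increasing; [apply exp_pos|]; lra).
  assert (Hs : 0 < y / (4 * x ^ 2)) by (apply Rdiv_lt_0_compat; nra).
  assert (Ey : ln y = ln (y / (4 * x ^ 2)) + 2 * ln (2 * x)).
  { replace y with (y / (4 * x ^ 2) * (2 * x) * (2 * x)) at 1 by (field; lra).
    rewrite !ln_mult by nra. ring. }
  pose proof (ln_le_sub1 _ Hs). pose proof (ln_le_sub1 (ln y) ltac:(lra)). lra.
Qed.

Lemma phi_le_lnln y M d : 0 <= y <= M -> exp (exp 1) <= M -> 0 < d ->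
  phi y <= 1 + d * y + ln (ln M) / (4 * d).
Proof.
  intros Hy HM Hd. pose proof (lnln_ge1 M HM).
  apply phi_le; [lra|lra|exact Hd|].
  intros Hee. pose proof (exp_ineq1_le (exp 1)). pose proof exp1_ge2. apply lnln_le; lra.
Qed.

Lemma partial_mono (u : nat -> R) a b :
  (forall k, (1 <= k)%nat -> 0 <= u k) -> (a <= b)%nat -> partial u a <= partial u b.
Proof.
  intros Hu Hab. induction Hab as [|b Hab IH]; [lra|].
  unfold partial in *. simpl. pose proof (Hu (S b) ltac:(lia)). lra.
Qed.

Lemma partial_between (u : nat -> R) c g k : 0 <= g ->
  (forall k, (1 <= k)%nat -> Rabs (partial u k - c * INR k) <= g * phi (INR k)) ->
  c * INR k - g * phi (INR k) <= partial u k <= c * INR k + g * phi (INR k).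
Proof.
  intros Hg Hu. destruct k as [|k].
  - unfold partial. simpl. pose proof (phi_nonneg 0). nra.
  - apply Rabs_le_between', Hu. lia.
Qed.

Lemma count_le_of_partial_bound (u : nat -> R) lam g n t : 0 < lam -> 0 <= g ->
  (forall k, (1 <= k)%nat -> Rabs (partial u k - / lam * INR k) <= g * phi (INR k)) ->
  partial u n <= t -> INR n <= lam * (t + g * phi (INR n)).
Proof.
  intros Hlam Hg Hu Hn. destruct (partial_between u (/ lam) g n Hg Hu) as [Hlow _].
  replace (INR n) with (lam * (/ lam * INR n)) at 1 by (field; lra).
  apply Rmult_le_compat_l; lra.
Qed.

Lemma arrival_count_right_constant J U A j t : IsArrivalCount J U A ->
  (forall k, (1 <= k)%nat -> 0 <= U j k) -> (j < J)%nat -> 0 <= t ->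
  exists d, 0 < d /\ forall s, t <= s < t + d -> A j s = A j t.
Proof.
  intros HA HU Hj Ht. destruct (HA j t Hj Ht) as [Hpt Hmax].
  (* the time left until the next arrival *)
  exists (partial (U j) (S (A j t)) - t). split.
  - destruct (Rle_dec (partial (U j) (S (A j t))) t) as [Hle|Hgt]; [|lra].
    specialize (Hmax _ Hle). lia.
  - intros s [Hts Hs]. destruct (HA j s Hj ltac:(lra)) as [Hps Hmaxs].
    assert (Hge : (A j t <= A j s)%nat) by (apply Hmaxs; lra).
    destruct (Nat.eq_dec (A j s) (A j t)) as [E|Hne]; [exact E|].
    assert (partial (U j) (S (A j t)) <= partial (U j) (A j s))
      by (apply partial_mono; [exact HU|lia]).
    lra.
Qed.

Lemma right_constant_finite (n : nat) (f : nat -> R -> nat) t :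
  (forall j, (j < n)%nat -> exists d, 0 < d /\ forall s, t <= s < t + d -> f j s = f j t) ->
  exists d, 0 < d /\ forall s, t <= s < t + d -> forall j, (j < n)%nat -> f j s = f j t.
Proof.
  induction n as [|n IH]; intros Hf.
  - exists 1. split; [lra|]. intros; lia.
  - destruct IH as [d1 [Hd1 H1]]; [intros; apply Hf; lia|].
    destruct (Hf n) as [d2 [Hd2 H2]]; [lia|].
    exists (Rmin d1 d2). split; [apply Rmin_glb_lt; assumption|].
    intros s Hs j Hj. pose proof (Rmin_l d1 d2). pose proof (Rmin_r d1 d2).
    destruct (Nat.eq_dec j n) as [->|Hne]; [apply H2; lra|apply H1; [lra|lia]].
Qed.

Lemma first_nonpos_exists (W : R -> R) T : 0 <= T -> W T <= 0 ->
  (forall t, 0 <= t -> 0 < W t -> exists d, 0 < d /\ forall s, t <= s < t + d -> 0 < W s) ->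
  exists B, IsBusyEnd W B /\ B <= T.
Proof.
  intros HT HWT Hpos.
  (* The first zero of [W] is minus the supremum of the reflected zero set. *)
  set (E := fun y => 0 <= - y /\ W (- y) <= 0).
  destruct (completeness E) as [m [Hub Hlub]].
  { exists 0. intros y [Hy _]. lra. }
  { exists (- T). unfold E. rewrite Ropp_involutive. split; lra. }
  assert (Hlow : forall t, 0 <= t -> W t <= 0 -> - m <= t).
  { intros t Ht HWt. assert (HE : E (- t)) by (unfold E; rewrite Ropp_involutive; split; lra).
    specialize (Hub _ HE). lra. }
  assert (Hm : m <= 0) by (apply Hlub; intros y [Hy _]; lra).
  exists (- m). split; [split; [lra|split]|apply Hlow; assumption].
  - intros t [Ht HtB]. destruct (Rle_dec (W t) 0) as [Hle|Hgt]; [|lra].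
    specialize (Hlow t Ht Hle). lra.
  - destruct (Rle_dec (W (- m)) 0) as [Hle|Hgt]; [exact Hle|exfalso].
    destruct (Hpos (- m)) as [d [Hd Hs]]; [lra|lra|].
    assert (m <= m - d); [|lra].
    apply Hlub. intros y [Hy HWy].
    destruct (Rlt_dec (- y) (- m + d)) as [Hlt|Hge]; [|lra].
    assert (Hmy : - m <= - y) by (specialize (Hub y (conj Hy HWy)); lra).
    specialize (Hs (- y) (conj Hmy Hlt)). lra.
Qed.

Lemma nilpotency_index_pos J N P : (0 < J)%nat ->
  (forall i j, (i < J)%nat -> (j < J)%nat -> nmatpow J P N i j = 0%nat) -> (1 <= N)%nat.
Proof.
  intros HJ HPnil. destruct N as [|N]; [|lia].
  specialize (HPnil 0%nat 0%nat HJ HJ). discriminate.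
Qed.

Lemma invIPT_diag_ge1 J N P i : (1 <= N)%nat -> (1 <= invIPT J N P i i)%nat.
Proof.
  intros HN. unfold invIPT. eapply Nat.le_trans; [|apply (nsum_ge_term _ _ 0%nat); lia].
  simpl. rewrite Nat.eqb_refl. lia.
Qed.

Lemma lambar_nonneg J N P lam i :
  (forall k, (k < J)%nat -> 0 <= lam k) -> 0 <= lambar J N P lam i.
Proof.
  intros Hlam. apply rsum_nonneg. intros k Hk. apply Rmult_le_pos; [apply pos_INR|auto].
Qed.

Lemma lambar_ge J N P lam i : (1 <= N)%nat -> (i < J)%nat ->
  (forall k, (k < J)%nat -> 0 <= lam k) -> lam i <= lambar J N P lam i.
Proof.
  intros HN Hi Hlam.
  apply Rle_trans with (INR (invIPT J N P i i) * lam i).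
  - pose proof (le_INR _ _ (invIPT_diag_ge1 J N P i HN)). pose proof (Hlam i Hi). simpl in *. nra.
  - apply (rsum_ge_term J (fun k => INR (invIPT J N P i k) * lam k)); [|exact Hi].
    intros k Hk. apply Rmult_le_pos; [apply pos_INR|auto].
Qed.

Lemma Abar_le J N P A lam t c j :
  (forall i, (i < J)%nat -> INR (A i t) <= lam i * c) ->
  INR (Abar J N P A j t) <= lambar J N P lam j * c.
Proof.
  intros HA. unfold Abar, lambar. rewrite INR_nsum, Rmult_comm, <- rsum_scal.
  apply rsum_le. intros i Hi. rewrite mult_INR.
  pose proof (pos_INR (invIPT J N P j i)). specialize (HA i Hi). nra.
Qed.

Lemma workload_le J N P A V lam mu G c Phi t : 0 <= G ->
  (forall j, (j < J)%nat -> 0 < mu j) ->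
  (forall j k, (j < J)%nat -> (1 <= k)%nat ->
     Rabs (partial (V j) k - / mu j * INR k) <= G * phi (INR k)) ->
  (forall i, (i < J)%nat -> INR (A i t) <= lam i * c) ->
  (forall j, (j < J)%nat -> phi (INR (Abar J N P A j t)) <= Phi) ->
  workload J N P A V t <= rho J N P lam mu * c + INR J * (G * Phi) - t.
Proof.
  intros HG Hmu HV HA HPhi. unfold workload, rho.
  apply Rplus_le_compat_r.
  rewrite <- rsum_const, Rmult_comm, <- rsum_scal, <- rsum_plus.
  apply rsum_le. intros j Hj.
  destruct (partial_between (V j) (/ mu j) G (Abar J N P A j t) HG (fun k => HV j k Hj)) as [_ Hup].
  pose proof (Abar_le J N P A lam t c j HA). specialize (HPhi j Hj).
  assert (Hinv : 0 < / mu j) by (apply Rinv_0_lt_compat, Hmu, Hj).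
  unfold Rdiv. nra.
Qed.

(* [A_j(t) <= lam_j * envelope L G t]: the crude linear bound on the arrivals. *)
Definition envelope (L G t : R) : R := 2 * t + 2 * G + 4 * G * (L * G) * ln (2 * (L * G)).

Definition busy_time (K L G q : R) : R :=
  5 * K ^ 2 * L ^ 3 * G ^ 4 / q ^ 2 * ln (ln (2 * K * L ^ 2 * G ^ 2 / q)).

Definition workload_peak (K L G q : R) : R :=
  2 * K ^ 2 * L ^ 3 * G ^ 4 / q * ln (ln (K * L ^ 2 * G ^ 2 / q)) + G + 3 * L ^ 2 * G ^ 3.

(* Bounds all arrival counts before [busy_time]. *)
Definition horizon (K L G q : R) : R := L * envelope L G (busy_time K L G q).

Definition drift_offset (K L G q : R) : R :=
  K * G + G / 2 + G * (L * G) * ln (2 * (L * G))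
  + K ^ 2 * G * (L * G) * ln (ln (horizon K L G q)) / q.

Lemma envelope_nonneg L G t : 0 <= t -> 0 <= G -> 1 <= L * G -> 0 <= envelope L G t.
Proof.
  intros Ht HG HLG. unfold envelope.
  assert (0 <= ln (2 * (L * G))) by (rewrite <- ln_1; apply ln_le; lra).
  assert (0 <= G * (L * G) * ln (2 * (L * G))) by (apply Rmult_le_pos; nra).
  lra.
Qed.

Lemma envelope_of_self_bound lam L G n t p :
  0 < lam <= L -> 0 <= G -> 1 <= L * G -> 0 <= n ->
  n <= lam * (t + G * p) -> p <= 1 + n / (2 * (L * G)) + 2 * (L * G) * ln (2 * (L * G)) ->
  n <= lam * envelope L G t.
Proof.
  intros Hlam HG HLG Hn Hself Hp. unfold envelope.
  set (x := L * G) in *.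
  assert (HlG : 0 <= lam * G <= x) by (unfold x; split; nra).
  assert (Hhalf : lam * G * (n / (2 * x)) <= n / 2).
  { assert (0 <= n / (2 * x)) by (apply Rle_mult_inv_pos; lra).
    replace (n / 2) with (x * (n / (2 * x))) by (field; lra). nra. }
  assert (lam * G * p <= lam * G * (1 + n / (2 * x) + 2 * x * ln (2 * x)))
    by (apply Rmult_le_compat_l; lra).
  nra.
Qed.

Section BusyConstants.

Variables K L G q : R.
Hypothesis HG : 0 < G.
Hypothesis HLG : exp (2 * exp 1) <= L * G.
Hypothesis HK : 7 <= K.
Hypothesis Hq : 0 < q <= 1.

Lemma LG_ge5 : 5 <= L * G.
Proof. pose proof (exp_ineq1_le (2 * exp 1)). pose proof exp1_ge2. lra. Qed.

Lemma L_pos : 0 < L.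
Proof. pose proof LG_ge5. nra. Qed.

Lemma scale_ge : 7 * (L * G) ^ 2 <= K * L ^ 2 * G ^ 2 / q.
Proof.
  apply Rmult_le_reg_r with q; [lra|].
  replace (K * L ^ 2 * G ^ 2 / q * q) with (K * (L * G) ^ 2) by (field; lra).
  pose proof (pow2_ge_0 (L * G)). nra.
Qed.

Lemma scale_large : exp (2 * exp 1) <= K * L ^ 2 * G ^ 2 / q.
Proof. pose proof LG_ge5. pose proof scale_ge. nra. Qed.

Lemma lnln_scale_ge1 : 1 <= ln (ln (K * L ^ 2 * G ^ 2 / q)).
Proof.
  apply lnln_ge1. pose proof scale_large. pose proof exp1_ge2.
  assert (exp (exp 1) <= exp (2 * exp 1)) by (apply exp_le_compat; lra). lra.
Qed.

Lemma busy_time_eq : busy_time K L G q =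
  5 * K ^ 2 * (L * G) ^ 3 * G / q ^ 2 * ln (ln (2 * (K * L ^ 2 * G ^ 2 / q))).
Proof.
  unfold busy_time.
  replace (2 * K * L ^ 2 * G ^ 2 / q) with (2 * (K * L ^ 2 * G ^ 2 / q)) by (field; lra).
  field. lra.
Qed.

Lemma busy_time_nonneg : 0 <= busy_time K L G q.
Proof.
  pose proof L_pos. pose proof scale_large. pose proof (exp_pos (2 * exp 1)).
  rewrite busy_time_eq. apply Rmult_le_pos.
  - apply Rle_mult_inv_pos; [|apply pow_lt; lra].
    repeat apply Rmult_le_pos; lra.
  - apply Rle_trans with 1; [lra|]. apply lnln_ge1.
    pose proof exp1_ge2. assert (exp (exp 1) <= exp (2 * exp 1)) by (apply exp_le_compat; lra).
    lra.
Qed.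

Lemma horizon_eq : horizon K L G q =
  10 * (K * L ^ 2 * G ^ 2 / q) ^ 2 * ln (ln (2 * (K * L ^ 2 * G ^ 2 / q)))
  + 2 * (L * G) + 4 * (L * G) ^ 2 * ln (2 * (L * G)).
Proof. pose proof L_pos. unfold horizon, envelope. rewrite busy_time_eq. field. lra. Qed.

Lemma horizon_ge : 2 * (L * G) <= horizon K L G q.
Proof.
  pose proof L_pos. pose proof LG_ge5. pose proof busy_time_nonneg.
  unfold horizon. apply Rle_trans with (L * (2 * G)); [lra|].
  apply Rmult_le_compat_l; [lra|].
  pose proof (envelope_nonneg L G (busy_time K L G q)). unfold envelope in *.
  assert (0 <= ln (2 * (L * G))) by (rewrite <- ln_1; apply ln_le; lra).
  assert (0 <= G * (L * G) * ln (2 * (L * G))) by (apply Rmult_le_pos; nra).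
  lra.
Qed.

Lemma horizon_large : exp (exp 1) <= horizon K L G q.
Proof.
  pose proof horizon_ge. pose proof LG_ge5. pose proof exp1_ge2.
  assert (exp (exp 1) <= exp (2 * exp 1)) by (apply exp_le_compat; lra). lra.
Qed.

Lemma horizon_le : horizon K L G q <= (K * L ^ 2 * G ^ 2 / q) ^ 4.
Proof.
  pose proof LG_ge5. pose proof scale_ge.
  rewrite horizon_eq.
  set (Y := K * L ^ 2 * G ^ 2 / q) in *. set (x := L * G) in *.
  assert (HY : 175 <= Y /\ 35 * x <= Y /\ 7 * x ^ 2 <= Y) by (split; [|split]; nra).
  assert (Hl2Y : ln (ln (2 * Y)) <= 2 * Y).
  { assert (0 < ln (2 * Y)) by (rewrite <- ln_1; apply ln_increasing; lra).
    pose proof (ln_le_sub1 (2 * Y) ltac:(lra)). pose proof (ln_le_sub1 (ln (2 * Y)) ltac:(lra)).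
    lra. }
  assert (Hl2x : ln (2 * x) <= 2 * x) by (pose proof (ln_le_sub1 (2 * x) ltac:(lra)); lra).
  assert (H1 : 10 * Y ^ 2 * ln (ln (2 * Y)) <= 20 * Y ^ 3) by nra.
  assert (H2 : 4 * x ^ 2 * ln (2 * x) <= 8 * x ^ 3) by nra.
  assert (H3 : 245 * x ^ 3 <= Y ^ 2) by nra.
  assert (H4 : 21 * Y ^ 3 <= Y ^ 4) by nra.
  nra.
Qed.

Lemma lnln_horizon_le : ln (ln (horizon K L G q)) <= 2 * ln (ln (K * L ^ 2 * G ^ 2 / q)).
Proof.
  pose proof horizon_ge. pose proof LG_ge5. pose proof scale_large. pose proof exp1_ge2.
  apply lnln_le_pow4; [|split; [lra|apply horizon_le]].
  assert (exp 4 <= exp (2 * exp 1)) by (apply exp_le_compat; lra). lra.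
Qed.

Lemma drift_offset_le_peak : drift_offset K L G q <= workload_peak K L G q.
Proof.
  pose proof LG_ge5 as Hx5. pose proof lnln_scale_ge1 as Hll. pose proof lnln_horizon_le as Hl.
  pose proof L_pos as HL.
  assert (Hl0 : 0 <= ln (ln (horizon K L G q))) by (pose proof (lnln_ge1 _ horizon_large); lra).
  unfold drift_offset, workload_peak.
  replace (2 * K ^ 2 * L ^ 3 * G ^ 4 / q) with (2 * K ^ 2 * (L * G) ^ 3 * G / q) by (field; lra).
  replace (3 * L ^ 2 * G ^ 3) with (3 * (L * G) ^ 2 * G) by ring.
  set (ll := ln (ln (K * L ^ 2 * G ^ 2 / q))) in *.
  set (l := ln (ln (horizon K L G q))) in *.
  set (x := L * G) in *.
  assert (Hs : 1 <= / q) by (rewrite <- Rinv_1; apply Rinv_le_contravar; lra).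
  unfold Rdiv. set (s := / q) in *.
  assert (Hl2x : ln (2 * x) <= 2 * x) by (pose proof (ln_le_sub1 (2 * x) ltac:(lra)); lra).
  assert (H1 : G * x * ln (2 * x) <= 2 * x ^ 2 * G) by (assert (0 <= G * x) by nra; nra).
  assert (HKs : 0 <= K ^ 2 * G * x * s) by (apply Rmult_le_pos; [|lra]; apply Rmult_le_pos; nra).
  assert (H2 : K ^ 2 * G * x * l * s <= 2 * K ^ 2 * G * x * ll * s) by nra.
  assert (H3 : K * G <= K ^ 2 * G * ll * s).
  { assert (K * G <= K ^ 2 * G) by (apply Rmult_le_compat_r; nra). assert (1 <= ll * s) by nra.
    assert (0 <= K ^ 2 * G) by nra. nra. }
  assert (H4 : 2 * K ^ 2 * G * x * ll * s + K * G <= 2 * K ^ 2 * x ^ 3 * G * s * ll)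
    by (assert (x + 1 <= x ^ 3) by nra; assert (0 <= K ^ 2 * G * ll * s) by nra; nra).
  nra.
Qed.

Lemma drift_offset_le_busy_time : drift_offset K L G q <= q * busy_time K L G q / 2.
Proof.
  pose proof LG_ge5 as Hx5. pose proof scale_large as HY. pose proof lnln_scale_ge1 as Hll1.
  eapply Rle_trans; [apply drift_offset_le_peak|].
  rewrite busy_time_eq. unfold workload_peak.
  replace (2 * K ^ 2 * L ^ 3 * G ^ 4 / q) with (2 * K ^ 2 * (L * G) ^ 3 * G / q) by (field; lra).
  replace (3 * L ^ 2 * G ^ 3) with (3 * (L * G) ^ 2 * G) by ring.
  replace (q * (5 * K ^ 2 * (L * G) ^ 3 * G / q ^ 2 * ln (ln (2 * (K * L ^ 2 * G ^ 2 / q)))) / 2)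
    with (5 / 2 * K ^ 2 * (L * G) ^ 3 * G / q * ln (ln (2 * (K * L ^ 2 * G ^ 2 / q))))
    by (field; lra).
  set (Y := K * L ^ 2 * G ^ 2 / q) in *. set (x := L * G) in *.
  assert (Hll : ln (ln Y) <= ln (ln (2 * Y))).
  { apply lnln_le; [|pose proof (exp_pos (2 * exp 1)); lra].
    pose proof (exp_ineq1_le (2 * exp 1)). pose proof exp1_ge2. lra. }
  set (ll := ln (ln Y)) in *. set (l2 := ln (ln (2 * Y))) in *.
  assert (Hs : 1 <= / q) by (rewrite <- Rinv_1; apply Rinv_le_contravar; lra).
  unfold Rdiv. set (s := / q) in *.
  assert (Hx3 : 0 <= K ^ 2 * x ^ 3 * G * s).
  { assert (0 <= x ^ 3) by (apply pow_le; lra). assert (0 <= K ^ 2) by nra.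
    apply Rmult_le_pos; [|lra]. apply Rmult_le_pos; [apply Rmult_le_pos|]; lra. }
  assert (H1 : 2 * K ^ 2 * x ^ 3 * G * s * ll <= 2 * K ^ 2 * x ^ 3 * G * s * l2) by nra.
  assert (H2 : G + 3 * x ^ 2 * G <= / 2 * K ^ 2 * x ^ 3 * G * s * l2).
  { assert (1 <= s * l2) by nra. assert (49 <= K ^ 2) by nra. assert (5 * x ^ 2 <= x ^ 3) by nra.
    assert (2 + 6 * x ^ 2 <= K ^ 2 * x ^ 3) by nra.
    assert (0 <= K ^ 2 * x ^ 3 * G) by nra. nra. }
  nra.
Qed.

Lemma drift_le t j : 0 <= t -> 0 <= j -> 1 + j <= K ->
  let d := q / (4 * K * (L * G)) in
  let Phi := 1 + d * (L * envelope L G t) + ln (ln (horizon K L G q)) / (4 * d) in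
  (1 - q) * (t + G * Phi) + j * (G * Phi) - t <= - (q * t / 2) + drift_offset K L G q.
Proof.
  intros Ht Hj HjK d Phi.
  pose proof LG_ge5. pose proof L_pos.
  pose proof (envelope_nonneg L G t Ht ltac:(lra) ltac:(lra)) as Henv.
  assert (Hl : 1 <= ln (ln (horizon K L G q))) by exact (lnln_ge1 _ horizon_large).
  set (l := ln (ln (horizon K L G q))) in *.
  (* This [d] makes the [t]-dependent part of [(1 + j) * G * Phi] at most [q * t / 2]. *)
  assert (EPhi : G * Phi = G + q / (4 * K) * envelope L G t + K * G * (L * G) * l / q)
    by (unfold Phi, d; field; repeat split; nra).
  assert (HGPhi : 0 <= G * Phi).
  { rewrite EPhi.
    assert (0 <= q / (4 * K) * envelope L G t)
      by (apply Rmult_le_pos; [apply Rle_mult_inv_pos|]; lra).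
    assert (0 <= K * G * (L * G) * l / q)
      by (apply Rle_mult_inv_pos; [|lra]; repeat apply Rmult_le_pos; lra).
    lra. }
  assert (Hstep : (1 - q) * (t + G * Phi) + j * (G * Phi) - t <= - q * t + (1 + j) * (G * Phi))
    by (assert (0 <= q * (G * Phi)) by (apply Rmult_le_pos; lra); lra).
  eapply Rle_trans; [exact Hstep|]. rewrite EPhi.
  assert (Ha : (1 + j) * (q / (4 * K)) <= q / 4).
  { replace ((1 + j) * (q / (4 * K))) with (q / 4 * ((1 + j) / K)) by (field; lra).
    assert ((1 + j) / K <= 1) by (apply Rmult_le_reg_r with K; [lra|]; field_simplify; lra). nra. }
  assert (Hb : (1 + j) * (K * G * (L * G) * l / q) <= K ^ 2 * G * (L * G) * l / q).
  { assert (0 <= G * (L * G) * l / q)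
      by (apply Rle_mult_inv_pos; [|lra]; repeat apply Rmult_le_pos; lra).
    replace ((1 + j) * (K * G * (L * G) * l / q)) with ((1 + j) * K * (G * (L * G) * l / q))
      by (field; lra).
    replace (K ^ 2 * G * (L * G) * l / q) with (K * K * (G * (L * G) * l / q)) by (field; lra).
    apply Rmult_le_compat_r; nra. }
  assert (Hc : (1 + j) * (q / (4 * K)) * envelope L G t <= q / 4 * envelope L G t)
    by (apply Rmult_le_compat_r; lra).
  assert (Hd : q / 4 * envelope L G t <= q * t / 2 + G / 2 + G * (L * G) * ln (2 * (L * G))).
  { unfold envelope. assert (0 <= ln (2 * (L * G))) by (rewrite <- ln_1; apply ln_le; lra).
    assert (0 <= G * (L * G) * ln (2 * (L * G))) by (apply Rmult_le_pos; nra). nra. }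
  unfold drift_offset. fold l.
  assert (HG1 : (1 + j) * G <= K * G) by (apply Rmult_le_compat_r; lra).
  nra.
Qed.

End BusyConstants.

Section BusyPeriod.

Variables (J N : nat) (P : nat -> nat -> nat) (U V : nat -> nat -> R) (A : nat -> R -> nat)
  (lam mu Ga Gs : nat -> R).

Let G := rmaxn J (fun i => Rmax (Ga i) (Gs i)).
Let L := rmaxn J (lambar J N P lam).
Let K := INR (4 * J + 3).
Let q := 1 - rho J N P lam mu.
Let W := workload J N P A V.
Let T := busy_time K L G q.

Hypothesis HJ : (0 < J)%nat.
Hypothesis HPnil : forall i j, (i < J)%nat -> (j < J)%nat -> nmatpow J P N i j = 0%nat.
Hypothesis HU : forall j k, (j < J)%nat -> (1 <= k)%nat -> 0 <= U j k.
Hypothesis HA : IsArrivalCount J U A.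
Hypothesis Hlam : forall j, (j < J)%nat -> 0 < lam j.
Hypothesis Hmu : forall j, (j < J)%nat -> 0 < mu j.
Hypothesis Hrho : rho J N P lam mu < 1.
Hypothesis HUb : forall j k, (j < J)%nat -> (1 <= k)%nat ->
  Rabs (partial (U j) k - / lam j * INR k) <= Ga j * phi (INR k).
Hypothesis HVb : forall j k, (j < J)%nat -> (1 <= k)%nat ->
  Rabs (partial (V j) k - / mu j * INR k) <= Gs j * phi (INR k).
Hypothesis HGmin : forall j, (j < J)%nat -> exp (2 * exp 1) <= lam j * G.

Lemma Ga_le_G i : (i < J)%nat -> Ga i <= G.
Proof. intros Hi. eapply Rle_trans; [apply Rmax_l|exact (rmaxn_ge J _ i Hi)]. Qed.

Lemma Gs_le_G i : (i < J)%nat -> Gs i <= G.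
Proof. intros Hi. eapply Rle_trans; [apply Rmax_r|exact (rmaxn_ge J _ i Hi)]. Qed.

Lemma G_pos : 0 < G.
Proof. pose proof (HGmin 0 HJ). pose proof (Hlam 0 HJ). pose proof (exp_pos (2 * exp 1)). nra. Qed.

Lemma lam_le_L i : (i < J)%nat -> lam i <= L.
Proof.
  intros Hi. apply Rle_trans with (lambar J N P lam i); [|exact (rmaxn_ge J _ i Hi)].
  apply lambar_ge; [exact (nilpotency_index_pos J N P HJ HPnil)|exact Hi|].
  intros k Hk. left. exact (Hlam k Hk).
Qed.

Lemma LG_large : exp (2 * exp 1) <= L * G.
Proof.
  eapply Rle_trans; [exact (HGmin 0 HJ)|].
  apply Rmult_le_compat_r; [left; exact G_pos|exact (lam_le_L 0 HJ)].
Qed.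

Lemma q_bounds : 0 < q <= 1.
Proof.
  assert (0 <= rho J N P lam mu).
  { apply rsum_nonneg. intros j Hj. apply Rle_mult_inv_pos; [|exact (Hmu j Hj)].
    apply lambar_nonneg. intros k Hk. left. exact (Hlam k Hk). }
  unfold q. lra.
Qed.

Lemma J_lt_K : 1 + INR J <= K.
Proof. unfold K. rewrite plus_INR, mult_INR. simpl. pose proof (pos_INR J). lra. Qed.

Lemma K_ge7 : 7 <= K.
Proof. pose proof (le_INR 1 J HJ). unfold K. rewrite plus_INR, mult_INR. simpl in *. lra. Qed.

Lemma arrivals_le_self i t : (i < J)%nat -> 0 <= t ->
  INR (A i t) <= lam i * (t + G * phi (INR (A i t))).
Proof.
  intros Hi Ht. apply (count_le_of_partial_bound (U i)).
  - exact (Hlam i Hi).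
  - left. exact G_pos.
  - intros k Hk. eapply Rle_trans; [exact (HUb i k Hi Hk)|].
    apply Rmult_le_compat_r; [apply phi_nonneg|exact (Ga_le_G i Hi)].
  - exact (proj1 (HA i t Hi Ht)).
Qed.

Lemma arrivals_le_envelope i t : (i < J)%nat -> 0 <= t ->
  INR (A i t) <= lam i * envelope L G t.
Proof.
  intros Hi Ht. pose proof LG_large. pose proof (exp_ineq1_le (2 * exp 1)). pose proof exp1_ge2.
  apply (envelope_of_self_bound (lam i) L G (INR (A i t)) t (phi (INR (A i t)))).
  - split; [exact (Hlam i Hi)|exact (lam_le_L i Hi)].
  - left. exact G_pos.
  - lra.
  - apply pos_INR.
  - exact (arrivals_le_self i t Hi Ht).
  - apply phi_le_linear; [lra|apply pos_INR].
Qed.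

Lemma workload_le_of_phi_bound t Phi : 0 <= t ->
  (forall y, 0 <= y <= L * envelope L G t -> phi y <= Phi) ->
  W t <= rho J N P lam mu * (t + G * Phi) + INR J * (G * Phi) - t.
Proof.
  intros Ht Hphi. pose proof G_pos as HG. pose proof LG_large. pose proof exp1_ge2.
  pose proof (exp_ineq1_le (2 * exp 1)).
  pose proof (envelope_nonneg L G t Ht ltac:(lra) ltac:(lra)) as Henv.
  assert (HAenv : forall i, (i < J)%nat -> 0 <= INR (A i t) <= L * envelope L G t).
  { intros i Hi. split; [apply pos_INR|].
    eapply Rle_trans; [exact (arrivals_le_envelope i t Hi Ht)|].
    apply Rmult_le_compat_r; [exact Henv|exact (lam_le_L i Hi)]. }
  apply (workload_le J N P A V lam mu G (t + G * Phi) Phi t).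
  - lra.
  - exact Hmu.
  - intros j k Hj Hk. eapply Rle_trans; [exact (HVb j k Hj Hk)|].
    apply Rmult_le_compat_r; [apply phi_nonneg|exact (Gs_le_G j Hj)].
  - intros i Hi. eapply Rle_trans; [exact (arrivals_le_self i t Hi Ht)|].
    apply Rmult_le_compat_l; [left; exact (Hlam i Hi)|].
    apply Rplus_le_compat_l, Rmult_le_compat_l; [lra|exact (Hphi _ (HAenv i Hi))].
  - intros j Hj. apply Hphi. split; [apply pos_INR|].
    eapply Rle_trans.
    { apply (Abar_le J N P A lam t (envelope L G t) j). intros i Hi.
      exact (arrivals_le_envelope i t Hi Ht). }
    apply Rmult_le_compat_r; [exact Henv|exact (rmaxn_ge J _ j Hj)].
Qed.

Lemma workload_le_drift t : 0 <= t <= T -> W t <= - (q * t / 2) + drift_offset K L G q.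
Proof.
  intros [Ht HtT].
  pose proof G_pos as HG. pose proof LG_large as HLG. pose proof K_ge7 as HK.
  pose proof q_bounds as Hq. pose proof (L_pos L G HG HLG) as HL.
  set (d := q / (4 * K * (L * G))).
  assert (Hd : 0 < d) by (apply Rdiv_lt_0_compat; [lra|]; apply Rmult_lt_0_compat; [lra|]; nra).
  set (Phi := 1 + d * (L * envelope L G t) + ln (ln (horizon K L G q)) / (4 * d)).
  eapply Rle_trans.
  { apply (workload_le_of_phi_bound t Phi Ht). intros y Hy.
    assert (Hyh : y <= horizon K L G q).
    { unfold horizon. fold T. eapply Rle_trans; [apply Hy|].
      apply Rmult_le_compat_l; [lra|]. unfold envelope. lra. }
    eapply Rle_trans.
    { apply (phi_le_lnln y (horizon K L G q) d); [lra| |exact Hd].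
      apply horizon_large; assumption. }
    unfold Phi. pose proof (Rmult_le_compat_l d _ _ ltac:(lra) (proj2 Hy)). lra. }
  replace (rho J N P lam mu) with (1 - q) by (unfold q; ring).
  apply drift_le; try assumption. apply pos_INR. exact J_lt_K.
Qed.

Lemma workload_right_drift t : 0 <= t ->
  exists d, 0 < d /\ forall s, t <= s < t + d -> W s = W t - (s - t).
Proof.
  intros Ht. destruct (right_constant_finite J A t) as [d [Hd Hconst]].
  { intros j Hj. apply (arrival_count_right_constant J U); auto. }
  exists d. split; [exact Hd|]. intros s Hs. unfold W, workload.
  rewrite (rsum_ext J (fun j => partial (V j) (Abar J N P A j s))
                      (fun j => partial (V j) (Abar J N P A j t))); [ring|].
  intros j Hj. unfold Abar. f_equal. apply nsum_ext. intros i Hi.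
  rewrite (Hconst s Hs i Hi). reflexivity.
Qed.

Lemma workload_positive_right t : 0 <= t -> 0 < W t ->
  exists d, 0 < d /\ forall s, t <= s < t + d -> 0 < W s.
Proof.
  intros Ht HWt. destruct (workload_right_drift t Ht) as [d [Hd Hdrift]].
  exists (Rmin d (W t)). split; [apply Rmin_glb_lt; assumption|].
  intros s Hs. pose proof (Rmin_l d (W t)). pose proof (Rmin_r d (W t)).
  rewrite Hdrift by lra. lra.
Qed.

Lemma busy_end_le_busy_time : exists B, IsBusyEnd W B /\ B <= T.
Proof.
  pose proof G_pos as HG. pose proof LG_large as HLG. pose proof K_ge7 as HK.
  pose proof q_bounds as Hq. pose proof (busy_time_nonneg K L G q HG HLG HK Hq) as HT.
  apply first_nonpos_exists; [exact HT| |exact workload_positive_right].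
  pose proof (drift_offset_le_busy_time K L G q HG HLG HK Hq).
  pose proof (workload_le_drift T (conj HT (Rle_refl T))). unfold T in *. lra.
Qed.

Lemma workload_le_peak t : 0 <= t <= T -> W t <= workload_peak K L G q.
Proof.
  intros Ht. pose proof G_pos as HG. pose proof LG_large as HLG. pose proof K_ge7 as HK.
  pose proof q_bounds as Hq. pose proof (drift_offset_le_peak K L G q HG HLG HK Hq).
  pose proof (workload_le_drift t Ht). assert (0 <= q * t / 2) by (apply Rmult_le_pos; nra).
  lra.
Qed.

End BusyPeriod.

Theorem theorem2
  (J N : nat) (P : nat -> nat -> nat)
  (U V : nat -> nat -> R) (A : nat -> R -> nat)
  (lam mu Ga Gs : nat -> R)
  (HJ : (0 < J)%nat)
  (HP01 : forall i j, (i < J)%nat -> (j < J)%nat -> (P i j <= 1)%nat)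
  (HProw : forall i, (i < J)%nat -> (nsum J (P i) <= 1)%nat)
  (HPnil : forall i j, (i < J)%nat -> (j < J)%nat -> nmatpow J P N i j = 0%nat)
  (HU : forall j k, (j < J)%nat -> (1 <= k)%nat -> 0 <= U j k)
  (HV : forall j k, (j < J)%nat -> (1 <= k)%nat -> 0 <= V j k)
  (HA : IsArrivalCount J U A)
  (Hlam : forall j, (j < J)%nat -> 0 < lam j)
  (Hmu : forall j, (j < J)%nat -> 0 < mu j)
  (Hrho : rho J N P lam mu < 1)
  (HGa : forall j, (j < J)%nat -> 0 <= Ga j)
  (HGs : forall j, (j < J)%nat -> 0 <= Gs j)
  (HUb : forall j k, (j < J)%nat -> (1 <= k)%nat ->
     Rabs (partial (U j) k - / lam j * INR k) <= Ga j * phi (INR k))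
  (HVb : forall j k, (j < J)%nat -> (1 <= k)%nat ->
     Rabs (partial (V j) k - / mu j * INR k) <= Gs j * phi (INR k))
  (HGmin : forall j, (j < J)%nat ->
     exp (2 * exp 1) <= lam j * rmaxn J (fun i => Rmax (Ga i) (Gs i))) :
  let G := rmaxn J (fun i => Rmax (Ga i) (Gs i)) in
  let L := rmaxn J (lambar J N P lam) in
  let K := INR (4 * J + 3) in
  let r := rho J N P lam mu in
  let W := workload J N P A V in
  exists B : R,
    IsBusyEnd W B /\
    B <= 5 * K ^ 2 * L ^ 3 * G ^ 4 / (1 - r) ^ 2
           * ln (ln (2 * K * L ^ 2 * G ^ 2 / (1 - r))) /\
    (forall t, 0 <= t <= B ->
       W t <= 2 * K ^ 2 * L ^ 3 * G ^ 4 / (1 - r)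
                * ln (ln (K * L ^ 2 * G ^ 2 / (1 - r)))
              + G + 3 * L ^ 2 * G ^ 3).
Proof.
  intros G L K r W.
  destruct (busy_end_le_busy_time J N P U V A lam mu Ga Gs) as [B [HB HBT]]; try assumption.
  exists B. split; [exact HB|split; [exact HBT|]].
  intros t [Ht HtB].
  apply (workload_le_peak J N P U V A lam mu Ga Gs); try assumption.
  split; [exact Ht|]. apply Rle_trans with B; assumption.
Qed.
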